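(* Consider the tensor network template $(G,c)$ with the following data. - Three inputs $s_1,s_2,s_3$ and two outputs $t_1,t_2$. - Three vertices $v_1,v_2,v_3$. - Edges and capacities: - $s_2$–$v_1$, capacity $2$; - $v_1$–$v_2$, capacity $2$; - $v_1$–$v_3$, capacity $2$; - $s_1$–$v_2$, capacity $2$; - $v_2$–$t_1$, capacity $3$; - $s_3$–$v_3$, capacity $2$; - $v_3$–$t_2$, capacity $3$. Then $\mathrm{QMC}(G,c)=8$ and $\mathrm{QMF}(G,c)=7$.
   Context: A tensor network template $(G,c)$ consists of a finite undirected graph $G$ with edge set $E$ whose vertex set is partitioned as $S\sqcup T\sqcup V$. Every element of $S$ (inputs) and every element of $T$ (outputs) is an open end of degree $1$; the elements of $V$ are called vertices. For $u\in S\sqcup T$, $e(u)$ denotes the edge incident to $u$. A capacity function $c:E\to\mathbb{Z}_{>0}$ is given, and to each edge $e$ one associates $\mathbb{C}^{c_e}$ with a fixed basis. At each vertex $v$ of degree $d_v$ an ordering $e(v,1),\dots,e(v,d_v)$ of the incident edge-ends is fixed. A tensor assignment $\mathcal T=(\mathcal T_v)_{v\in V}$ chooses $\mathcal T_v\in\bigotimes_{i=1}^{d_v}\mathbb{C}^{c_{e(v,i)}}$ for each $v$. Let $V_S=\bigotimes_{u\in S}\mathbb{C}^{c_{e(u)}}$ and $V_T=\bigotimes_{u\in T}\mathbb{C}^{c_{e(u)}}$. Contracting the network along all edges gives $\beta(G,c;\mathcal T)\in\mathrm{Hom}(V_S,V_T)$, whose matrix entries are $\langle I_T|\beta|I_S\rangle=\sum_W\prod_{v\in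 V}(\mathcal T_v)_{W|_v}$. Here $W$ ranges over all assignments of basis indices to all edges that agree with $I_S$ on the input edges and with $I_T$ on the output edges, and $W|_v$ is the tuple of indices on $e(v,1),\dots,e(v,d_v)$. The quantum max-flow is $\mathrm{QMF}(G,c)=\max_{\mathcal T}\operatorname{rank}\beta(G,c;\mathcal T)$. An edge cut set is a set $C\subseteq E$ for which there is a partition $S\sqcup T\sqcup V=\bar S\sqcup\bar T$ with $S\subseteq\bar S$, $T\subseteq\bar T$, and $C$ equal to the set of edges having one endpoint in $\bar S$ and the other in $\bar T$. The quantum min-cut is $\mathrm{QMC}(G,c)=\min_C\prod_{e\in C}c_e$, the minimum taken over all edge cut sets $C$. *)

From HB Require Import structures.
From mathcomp Require Import all_boot all_order all_algebra.
Set Implicit Arguments. Unset Strict Implicit. Unset Printing Implicit Defensive.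
Import GRing.Theory Num.Theory.
Local Open Scope ring_scope.

(* Nodes are  (S + T) + V  : inputs, outputs, vertices.               *)
(* eS u / eT u : the edge e(u) incident to an input / output u,       *)
(* vends v : the ordered list e(v,1),...,e(v,d_v) of edge-ends at v.   *)

Section TensorNetwork.
Variables (S T V E : finType).

Definition node := ((S + T) + V)%type.

Section Cut.
Variables (ends : E -> node * node) (cap : E -> nat).

Definition cut_set (Sbar : {set node}) : {set E} :=
  [set e | ((ends e).1 \in Sbar) != ((ends e).2 \in Sbar)].

Definition valid_cut (Sbar : {set node}) : bool :=
  [forall u : S, (inl (inl u) : node) \in Sbar] &&
  [forall u : T, (inl (inr u) : node) \notin Sbar].

Definition is_QMC (n : nat) : Prop :=
  (exists2 Sbar, valid_cut Sbar & (\prod_(e in cut_set Sbar) cap e)%N = n) /\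
  (forall Sbar, valid_cut Sbar -> (n <= \prod_(e in cut_set Sbar) cap e)%N).
End Cut.

Section Flow.
Variables (R : fieldType) (cap : E -> nat) (eS : S -> E) (eT : T -> E)
          (vends : V -> seq E).

Definition assignment := {dffun forall e : E, 'I_(cap e)}.
Definition in_idx := {dffun forall u : S, 'I_(cap (eS u))}.
Definition out_idx := {dffun forall u : T, 'I_(cap (eT u))}.

(* A tensor assignment: T_v gives the component (T_v)_{i_1...i_{d_v}} for
   each index tuple (only tuples with i_k < c_{e(v,k)} are ever used). *)
Definition tensor_assignment := V -> seq nat -> R.

Definition contraction_entry (Tv : tensor_assignment)
    (IT : out_idx) (IS : in_idx) : R :=
  \sum_(W : assignment | [forall u : S, W (eS u) == IS u] &&
                         [forall u : T, W (eT u) == IT u])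
     \prod_(v : V) Tv v [seq (W e : nat) | e <- vends v].

(* matrix of beta(G,c;T) in the product bases (rows: V_T, columns: V_S) *)
Definition contraction_matrix (Tv : tensor_assignment)
    : 'M[R]_(#|{: out_idx}|, #|{: in_idx}|) :=
  \matrix_(i, j) contraction_entry Tv (enum_val i) (enum_val j).

Definition is_QMF (n : nat) : Prop :=
  (exists Tv : tensor_assignment, \rank (contraction_matrix Tv) = n) /\
  (forall Tv : tensor_assignment, (\rank (contraction_matrix Tv) <= n)%N).
End Flow.
End TensorNetwork.

(* inputs s1,s2,s3 = 0,1,2 : 'I_3 ; outputs t1,t2 = 0,1 : 'I_2 ;       *)
(* vertices v1,v2,v3 = 0,1,2 : 'I_3 ; edges 0..6 : 'I_7 :              *)
(*  0: s2-v1 (2)  1: v1-v2 (2)  2: v1-v3 (2)  3: s1-v2 (2)             *)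
(*  4: v2-t1 (3)  5: s3-v3 (2)  6: v3-t2 (3)                           *)

Definition exS := 'I_3.
Definition exT := 'I_2.
Definition exV := 'I_3.
Definition exE := 'I_7.

Definition ex_s (i : 'I_3) : node exS exT exV := inl (inl i).
Definition ex_t (i : 'I_2) : node exS exT exV := inl (inr i).
Definition ex_v (i : 'I_3) : node exS exT exV := inr i.

Definition o3 (k : nat) : 'I_3 := inord k.
Definition o2 (k : nat) : 'I_2 := inord k.
Definition o7 (k : nat) : 'I_7 := inord k.

Definition ex_ends (e : exE) : node exS exT exV * node exS exT exV :=
  nth (ex_s (o3 0), ex_v (o3 0))
    [:: (ex_s (o3 1), ex_v (o3 0));
        (ex_v (o3 0), ex_v (o3 1));
        (ex_v (o3 0), ex_v (o3 2));
        (ex_s (o3 0), ex_v (o3 1));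
        (ex_v (o3 1), ex_t (o2 0));
        (ex_s (o3 2), ex_v (o3 2));
        (ex_v (o3 2), ex_t (o2 1))]
    e.

Definition ex_cap (e : exE) : nat := nth 0%N [:: 2; 2; 2; 2; 3; 2; 3]%N e.

Definition ex_eS (u : exS) : exE := nth (o7 0) [:: o7 3; o7 0; o7 5] u.
Definition ex_eT (u : exT) : exE := nth (o7 0) [:: o7 4; o7 6] u.
Definition ex_vends (v : exV) : seq exE :=
  nth [::] [:: [:: o7 0; o7 1; o7 2]; [:: o7 1; o7 3; o7 4];
              [:: o7 2; o7 5; o7 6]] v.

From HB Require Import structures.
From mathcomp Require Import all_boot all_order all_algebra.
From mathcomp Require Import ring.
Set Implicit Arguments. Unset Strict Implicit. Unset Printing Implicit Defensive.
Import GRing.Theory.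

(* Min-cut: the cut around the three inputs costs 2 * 2 * 2 = 8, and the eight
   cuts obtained by placing v1, v2, v3 on either side all cost at least 8.

   Max-flow >= 7: a copy tensor at v1 and addition tensors at v2 and v3 make the
   network compute the basis map (i, j, k) |-> (j + i, j + k), which is injective
   on the seven triples other than (0, 1, 0).

   Max-flow <= 7: the entry of the network at (p, q), (i, j, k) is
   (A_p N_j B_q^T)_(i,k), where A_p, B_q (p, q < 3) and N_0, N_1 are 2 x 2 slices
   of the three tensors, so it suffices to find a nonzero family X_0, X_1 with
   sum_j tr (X_j^T A_p N_j B_q^T) = 0 for all p, q. Three 2 x 2 matrices have a
   common nonzero orthogonal matrix u (resp. w) for the trace form. With J the
   rotation by a right angle, (J M)^T = J M - tr M J, so Phi_p = (u J^T)^T A_p and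
   Psi_q = (w J^T)^T B_q are symmetric. Put M_j = (u J^T) N_j (w J^T)^T. Then
   X = (-M_1, M_0) works because tr (P^T Phi Q Psi^T) is symmetric in P, Q; if
   M_0 = 0, then X = (u E w^T, 0) works for every E because u^T A_p factors as
   (A_p J)^T (u J^T). *)

(** * Linear algebra *)

Lemma ord2P (i : 'I_2) : i = ord0 \/ i = ord_max.
Proof. by case: i => -[|[|//]] ?; [left | right]; apply: val_inj. Qed.

Lemma big_ord2 (R : Type) (idx : R) (op : Monoid.law idx) (F : 'I_2 -> R) :
  \big[op/idx]_(i < 2) F i = op (F ord0) (F ord_max).
Proof. by rewrite big_ord_recl big_ord1; congr (op _ (F _)); apply: val_inj. Qed.

Section TraceFacts.
Variable R : comPzRingType.
Local Open Scope ring_scope.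

Lemma mxtrace_trmx_mulE m n (A B : 'M[R]_(m, n)) :
  \tr (A^T *m B) = \sum_i \sum_j A i j * B i j.
Proof.
rewrite exchange_big; apply: eq_bigr => j _; rewrite mxE.
by apply: eq_bigr => i _; rewrite mxE.
Qed.

Lemma mxvec_dotE m n (A B : 'M[R]_(m, n)) :
  (mxvec A *m (mxvec B)^T) 0 0 = \sum_i \sum_j A i j * B i j.
Proof.
rewrite pair_big mxE (reindex _ (curry_mxvec_bij _ _)) /=.
by apply: eq_bigr => -[i j] _; rewrite !mxE !mxvecE.
Qed.

Lemma mxtrace_sym_pairing n (P Q Phi Psi : 'M[R]_n) :
  Phi^T = Phi -> Psi^T = Psi ->
  \tr (P^T *m Phi *m Q *m Psi^T) = \tr (Q^T *m Phi *m P *m Psi^T).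
Proof.
move=> symPhi symPsi; rewrite -mxtrace_tr !trmx_mul !trmxK symPhi symPsi.
by rewrite mxtrace_mulC !mulmxA.
Qed.

Lemma mulmx_delta_mxE m n p r (A : 'M[R]_(m, n))
    (B : 'M_(p, r)) a b i k :
  (A *m delta_mx a b *m B) i k = A i a * B b k.
Proof.
rewrite -(mul_delta_mx (0 : 'I_1)) mulmxA -colE -mulmxA -rowE.
by rewrite !mxE big_ord1 !mxE.
Qed.
End TraceFacts.

Section MatrixRank.
Variable F : fieldType.
Local Open Scope ring_scope.

Lemma mxrank_ltn_rows m n (A : 'M[F]_(m, n)) (v : 'rV_m) :
  v != 0 -> v *m A = 0 -> (\rank A < m)%N.
Proof.
move=> nz_v vA0; have vK : (v <= kermx A)%MS by apply/sub_kermxP.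
have nz_rank : (0 < \rank v)%N by rewrite lt0n mxrank_eq0.
by have := leq_trans nz_rank (mxrankS vK); rewrite mxrank_ker subn_gt0.
Qed.

Lemma mxrank_mxsub m n m' n' (f : 'I_m' -> 'I_m) (g : 'I_n' -> 'I_n)
    (A : 'M[F]_(m, n)) :
  (\rank (mxsub f g A) <= \rank A)%N.
Proof.
rewrite mxsubrc rowsubE; apply: leq_trans (mxrankM_maxr _ _) _.
by rewrite -[A in colsub g A]mulmx1 -mulmx_colsub mxrankM_maxl.
Qed.

Lemma exists_orthogonal_mx m n p (alpha : 'I_p -> 'M[F]_(m, n)) :
  (p < m * n)%N -> exists2 u : 'M_(m, n), u != 0 & forall k, \tr (u^T *m alpha k) = 0.
Proof.
move=> p_lt; pose A : 'M_(p, m * n) := \matrix_(k < p) mxvec (alpha k).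
pose v := nz_row (kermx A^T).
exists (vec_mx v).
  rewrite -mxvec_eq0 vec_mxK nz_row_eq0 -mxrank_eq0 mxrank_ker mxrank_tr.
  by rewrite subn_eq0 -ltnNge (leq_ltn_trans (rank_leq_row A)).
move=> k; have /sub_kermxP/(congr1 (fun M : 'rV_p => M 0 k)) := nz_row_sub (kermx A^T).
rewrite [RHS]mxE mxtrace_trmx_mulE -mxvec_dotE vec_mxK => <-.
by rewrite !mxE; apply: eq_bigr => l _; rewrite !mxE.
Qed.
End MatrixRank.

Section Rotation.
Variable R : comPzRingType.
Local Open Scope ring_scope.

Definition rot2 : 'M[R]_2 := \matrix_(i, j) ((i < j)%N%:R - (j < i)%N%:R).

Local Ltac mx2_ring :=
  apply/matrixP => /ord2P[->|->] /ord2P[->|->];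
  rewrite /mxtrace !(mxE, big_ord2) /=; ring.

Lemma rot2_conj_trmx (M : 'M[R]_2) : rot2^T *m M^T *m rot2^T = M - (\tr M)%:M.
Proof. mx2_ring. Qed.

Lemma trmx_rot2_mul (M : 'M[R]_2) : (rot2 *m M)^T = rot2 *m M - \tr M *: rot2.
Proof. mx2_ring. Qed.
End Rotation.
Arguments rot2 {R}.

Section KernelTensor.
Variable F : fieldType.
Local Open Scope ring_scope.

Lemma trmx_mul_rot2_factor (u a : 'M[F]_2) :
  \tr (u^T *m a) = 0 -> u^T *m a = (a *m rot2)^T *m (u *m rot2^T).
Proof.
move=> tr0; have := rot2_conj_trmx (u^T *m a).
by rewrite tr0 raddf0 subr0 !trmx_mul trmxK !mulmxA => <-.
Qed.

Lemma rot2_trmx_mul_sym (u a : 'M[F]_2) :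
  \tr (u^T *m a) = 0 -> ((u *m rot2^T)^T *m a)^T = (u *m rot2^T)^T *m a.
Proof.
by move=> tr0; rewrite [(u *m _)^T]trmx_mul trmxK -mulmxA trmx_rot2_mul tr0 scale0r subr0.
Qed.

Lemma exists_kernel_tensor (N : 'I_2 -> 'M[F]_2) (alpha beta : 'I_3 -> 'M[F]_2) :
  exists2 X : 'I_2 -> 'M[F]_2, exists j, X j != 0 &
    forall p q, \sum_(j < 2) \tr ((X j)^T *m (alpha p *m N j *m (beta q)^T)) = 0.
Proof.
have [u nz_u u_orth] := exists_orthogonal_mx alpha (isT : 3 < 2 * 2)%N.
have [w nz_w w_orth] := exists_orthogonal_mx beta (isT : 3 < 2 * 2)%N.
pose U := u *m rot2^T; pose W := w *m rot2^T.
pose M j := U *m N j *m W^T.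
have [M0 | nzM0] := eqVneq (M ord0) 0.
  have [i [a nz_ua]] := matrix0Pn _ nz_u.
  have [k [b nz_wb]] := matrix0Pn _ nz_w.
  exists (fun j => if j == ord0 then u *m delta_mx a b *m w^T else 0).
    exists ord0; apply/matrix0Pn; exists i, k.
    by rewrite /= mulmx_delta_mxE mxE mulf_neq0.
  move=> p q; rewrite big_ord2 /= trmx0 mul0mx mxtrace0 addr0.
  have betaW : (beta q)^T *m w = W^T *m (beta q *m rot2).
    by rewrite -[LHS]trmxK trmx_mul trmxK trmx_mul_rot2_factor // [LHS]trmx_mul trmxK.
  have factorM : u^T *m (alpha p *m (N ord0 *m ((beta q)^T *m w))) =
      (alpha p *m rot2)^T *m M ord0 *m (beta q *m rot2).
    by rewrite mulmxA (trmx_mul_rot2_factor (u_orth p)) betaW !mulmxA.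
  rewrite !trmx_mul trmxK -!mulmxA mxtrace_mulC -!mulmxA.
  by rewrite factorM M0 mulmx0 mul0mx !mulmx0 mxtrace0.
exists (fun j => if j == ord0 then - M ord_max else M ord0); first by exists ord_max.
move=> p q; pose Phi := U^T *m alpha p; pose Psi := W^T *m beta q.
have pairingE j k : \tr ((M j)^T *m (alpha p *m N k *m (beta q)^T)) =
    \tr ((N j)^T *m Phi *m N k *m Psi^T).
  rewrite /Phi /Psi /M /U /W !trmx_mul !trmxK -!mulmxA mxtrace_mulC !mulmxA.
  by rewrite -!mulmxA [LHS]mxtrace_mulC !mulmxA.
have symPhi : Phi^T = Phi by exact: rot2_trmx_mul_sym.
have symPsi : Psi^T = Psi by exact: rot2_trmx_mul_sym.
rewrite big_ord2 /= linearN mulNmx raddfN /= (pairingE ord0) (pairingE ord_max).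
by rewrite (mxtrace_sym_pairing (N ord0)) // addNr.
Qed.
End KernelTensor.

(** * The template *)

Local Notation s1 := (o3 0 : exS).
Local Notation s2 := (o3 1 : exS).
Local Notation s3 := (o3 2 : exS).
Local Notation t1 := (o2 0 : exT).
Local Notation t2 := (o2 1 : exT).
Local Notation v1 := (o3 0 : exV).
Local Notation v2 := (o3 1 : exV).
Local Notation v3 := (o3 2 : exV).
Local Notation ex_assignment := (assignment ex_cap).
Local Notation ex_in := (in_idx ex_cap ex_eS).
Local Notation ex_out := (out_idx ex_cap ex_eT).

Lemma o2K n : n < 2 -> o2 n = n :> nat. Proof. exact: inordK. Qed.
Lemma o3K n : n < 3 -> o3 n = n :> nat. Proof. exact: inordK. Qed.
Lemma o7K n : n < 7 -> o7 n = n :> nat. Proof. exact: inordK. Qed.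

Lemma o2E (u : 'I_2) : u = o2 u. Proof. by rewrite /o2 inord_val. Qed.
Lemma o3E (u : 'I_3) : u = o3 u. Proof. by rewrite /o3 inord_val. Qed.
Lemma o7E (e : exE) : e = o7 e. Proof. by rewrite /o7 inord_val. Qed.

Lemma ex_eS_val (u : exS) : ex_eS u = nth 0 [:: 3; 0; 5] u :> nat.
Proof. by rewrite /ex_eS; case: u => -[|[|[|//]]] ? /=; rewrite o7K. Qed.

Lemma ex_eT_val (u : exT) : ex_eT u = nth 0 [:: 4; 6] u :> nat.
Proof. by rewrite /ex_eT; case: u => -[|[|//]] ? /=; rewrite o7K. Qed.

Lemma ex_capS (u : exS) : ex_cap (ex_eS u) = 2.
Proof. by rewrite /ex_cap ex_eS_val; case: u => -[|[|[|//]]]. Qed.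

Lemma ex_capT (u : exT) : ex_cap (ex_eT u) = 3.
Proof. by rewrite /ex_cap ex_eT_val; case: u => -[|[|//]]. Qed.

Lemma ex_cap_gt0 (e : exE) : (0 < ex_cap e).
Proof. by case: e => -[|[|[|[|[|[|[|//]]]]]]]. Qed.

Definition ex_in_coord (IS : ex_in) (u : exS) : 'I_2 := cast_ord (ex_capS u) (IS u).
Definition ex_out_coord (IT : ex_out) (u : exT) : 'I_3 := cast_ord (ex_capT u) (IT u).

Lemma ex_in_lt (IS : ex_in) (u : exS) : (IS u < 2).
Proof. exact: ltn_ord (ex_in_coord IS u). Qed.

Lemma ex_out_lt (IT : ex_out) (u : exT) : (IT u < 3).
Proof. exact: ltn_ord (ex_out_coord IT u). Qed.

Definition ex_edge_values (IT : ex_out) (IS : ex_in) (a b : nat) : seq nat :=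
  [:: IS s2 : nat; a; b; IS s1 : nat; IT t1 : nat; IS s3 : nat; IT t2 : nat].

(* Reducing modulo the capacity only serves to produce an ordinal: by
   [ex_fill_val] the entries are unchanged. *)
Definition ex_fill (IT : ex_out) (IS : ex_in) (a b : nat) : ex_assignment :=
  finfun (fun e : exE => Ordinal (ltn_pmod (nth 0 (ex_edge_values IT IS a b) e) (ex_cap_gt0 e))).

Lemma ex_fill_val IT IS a b n : a < 2 -> b < 2 -> n < 7 ->
  ex_fill IT IS a b (o7 n) = nth 0 (ex_edge_values IT IS a b) n :> nat.
Proof.
move=> lt_a2 lt_b2 lt_n7; rewrite ffunE /= modn_small // /ex_cap o7K //.
case: n lt_n7 => [|[|[|[|[|[|[|//]]]]]]] _ /=;
  by rewrite ?ex_in_lt ?ex_out_lt.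
Qed.

Lemma ex_eS_o3 n : n < 3 -> ex_eS (o3 n) = o7 (nth 0 [:: 3; 0; 5] n).
Proof.
move=> lt_n3; apply: val_inj => /=; rewrite ex_eS_val o3K // o7K //.
by case: n lt_n3 => [|[|[|]]].
Qed.

Lemma ex_eT_o2 n : n < 2 -> ex_eT (o2 n) = o7 (nth 0 [:: 4; 6] n).
Proof.
move=> lt_n2; apply: val_inj => /=; rewrite ex_eT_val o2K // o7K //.
by case: n lt_n2 => [|[|]].
Qed.

Lemma ex_internal_lt (W : ex_assignment) n : n < 3 -> 0 < n -> W (o7 n) < 2.
Proof.
move=> lt_n3 gt0_n; move: (W (o7 n)); rewrite /ex_cap o7K ?(ltn_trans lt_n3) //.
by case: n lt_n3 gt0_n => [|[|[|]]].
Qed.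

Lemma ex_fill_internal (IT : ex_out) (IS : ex_in) (W : ex_assignment) :
  [forall u, W (ex_eS u) == IS u] -> [forall u, W (ex_eT u) == IT u] ->
  ex_fill IT IS (W (o7 1)) (W (o7 2)) = W.
Proof.
move=> /forallP HS /forallP HT.
have WS n : n < 3 -> W (o7 (nth 0 [:: 3; 0; 5] n)) = IS (o3 n) :> nat.
  by move=> lt_n3; rewrite -ex_eS_o3 // (eqP (HS _)).
have WT n : n < 2 -> W (o7 (nth 0 [:: 4; 6] n)) = IT (o2 n) :> nat.
  by move=> lt_n2; rewrite -ex_eT_o2 // (eqP (HT _)).
apply/ffunP => e; apply: val_inj => /=; rewrite (o7E e).
rewrite ex_fill_val ?ex_internal_lt //.
by case: e => -[|[|[|[|[|[|[|//]]]]]]] ? /=; rewrite ?(WS 0) ?(WS 1) ?(WS 2) ?(WT 0) ?(WT 1).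
Qed.

Lemma ex_fill_boundary IT IS (a b : 'I_2) :
  [forall u, ex_fill IT IS a b (ex_eS u) == IS u] &&
  [forall u, ex_fill IT IS a b (ex_eT u) == IT u].
Proof.
apply/andP; split; apply/forallP => u; apply/eqP/val_inj => /=.
  rewrite -[RHS]/(nat_of_ord (ex_in_coord IS u)) (o3E u).
  by case: u => -[|[|[|//]]] ?; rewrite ex_eS_o3 // ex_fill_val.
rewrite -[RHS]/(nat_of_ord (ex_out_coord IT u)) (o2E u).
by case: u => -[|[|//]] ?; rewrite ex_eT_o2 // ex_fill_val.
Qed.

Lemma prod_exV (R : comPzSemiRingType) (F : exV -> R) :
  (\prod_(v : exV) F v = F v1 * F v2 * F v3)%R.
Proof.
rewrite !big_ord_recl big_ord0 mulr1 mulrA.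
by congr (F _ * F _ * F _)%R; apply: val_inj; rewrite /= o3K.
Qed.

Lemma ex_contraction_entryE (R : fieldType) (Tv : exV -> seq nat -> R)
    (IT : ex_out) (IS : ex_in) :
  contraction_entry ex_vends Tv IT IS =
  (\sum_(a < 2) \sum_(b < 2) Tv v1 [:: IS s2 : nat; a : nat; b : nat] *
     Tv v2 [:: a : nat; IS s1 : nat; IT t1 : nat] *
     Tv v3 [:: b : nat; IS s3 : nat; IT t2 : nat])%R.
Proof.
rewrite /contraction_entry (reindex_onto (fun ab : 'I_2 * 'I_2 => ex_fill IT IS ab.1 ab.2)
  (fun W => (inord (W (o7 1)), inord (W (o7 2))))) /=; last first.
  move=> W /andP[HS HT]; rewrite !inordK ?ex_internal_lt //; exact: ex_fill_internal HS HT.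
rewrite (eq_bigl (fun _ => true)) => [|[a b]]; last first.
  by rewrite ex_fill_boundary /= !ex_fill_val ?ltn_ord // !inord_val eqxx.
rewrite [RHS]pair_bigA; apply: eq_bigr => -[a b] _ /=.
by rewrite prod_exV /ex_vends !o3K //= !ex_fill_val.
Qed.

Definition ex_in_of (i j k : nat) : ex_in :=
  finfun (fun u : exS =>
    Ordinal (ltn_pmod (nth 0 [:: i; j; k] u) (ex_cap_gt0 (ex_eS u)))).

Definition ex_out_of (p q : nat) : ex_out :=
  finfun (fun u : exT => Ordinal (ltn_pmod (nth 0 [:: p; q] u) (ex_cap_gt0 (ex_eT u)))).

Lemma ex_in_of_val i j k n :
  n < 3 -> ex_in_of i j k (o3 n) = nth 0 [:: i; j; k] n %% 2 :> nat.
Proof. by move=> lt_n3; rewrite ffunE /= ex_capS o3K. Qed.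

Lemma ex_out_of_val p q n : n < 2 -> ex_out_of p q (o2 n) = nth 0 [:: p; q] n %% 3 :> nat.
Proof. by move=> lt_n2; rewrite ffunE /= ex_capT o2K. Qed.

Lemma ex_in_ofK : cancel (fun ijk : 'I_2 * 'I_2 * 'I_2 => ex_in_of ijk.1.1 ijk.1.2 ijk.2)
  (fun IS => (ex_in_coord IS s1, ex_in_coord IS s2, ex_in_coord IS s3)).
Proof.
move=> [[i j] k]; congr (_, _, _); apply: val_inj => /=;
  by rewrite ex_in_of_val //= modn_small.
Qed.

Lemma ex_in_ofV : cancel (fun IS => (ex_in_coord IS s1, ex_in_coord IS s2, ex_in_coord IS s3))
  (fun ijk : 'I_2 * 'I_2 * 'I_2 => ex_in_of ijk.1.1 ijk.1.2 ijk.2).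
Proof.
move=> IS; apply/ffunP => u; apply: val_inj => /=; rewrite ffunE /= (o3E u).
by case: u => -[|[|[|//]]] ? /=; rewrite o3K //= modn_small.
Qed.

Lemma ex_in_of_bij : bijective (fun ijk : 'I_2 * 'I_2 * 'I_2 => ex_in_of ijk.1.1 ijk.1.2 ijk.2).
Proof. exact: Bijective ex_in_ofK ex_in_ofV. Qed.

Lemma card_ex_in : #|{: ex_in}| = 8.
Proof. by rewrite -(bij_eq_card ex_in_of_bij) !card_prod !card_ord. Qed.

Lemma sum_ex_in (R : nmodType) (G : ex_in -> R) :
  (\sum_IS G IS = \sum_(i < 2) \sum_(j < 2) \sum_(k < 2) G (ex_in_of i j k))%R.
Proof.
rewrite (pair_bigA _ (fun i j : 'I_2 => \sum_(k < 2) G (ex_in_of i j k))%R) /=.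
rewrite (pair_bigA _ (fun (ij : 'I_2 * 'I_2) (k : 'I_2) => G (ex_in_of ij.1 ij.2 k))) /=.
rewrite (reindex (fun ijk : 'I_2 * 'I_2 * 'I_2 => ex_in_of ijk.1.1 ijk.1.2 ijk.2)) //.
exact: onW_bij ex_in_of_bij.
Qed.

Section UpperBound.
Variables (R : fieldType) (Tv : exV -> seq nat -> R).
Local Open Scope ring_scope.

Definition ex_v1_slice (j : 'I_2) : 'M[R]_2 := \matrix_(a, b) Tv v1 [:: j : nat; a : nat; b : nat].
Definition ex_v2_slice (p : 'I_3) : 'M[R]_2 := \matrix_(i, a) Tv v2 [:: a : nat; i : nat; p : nat].
Definition ex_v3_slice (q : 'I_3) : 'M[R]_2 := \matrix_(k, b) Tv v3 [:: b : nat; k : nat; q : nat].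

Lemma ex_contraction_entry_mx IT IS :
  contraction_entry ex_vends Tv IT IS =
  (ex_v2_slice (ex_out_coord IT t1) *m ex_v1_slice (ex_in_coord IS s2) *m
     (ex_v3_slice (ex_out_coord IT t2))^T) (ex_in_coord IS s1) (ex_in_coord IS s3).
Proof.
rewrite ex_contraction_entryE mxE exchange_big; apply: eq_bigr => b _.
rewrite !mxE big_distrl; apply: eq_bigr => a _.
by rewrite !mxE /= [_ * Tv v2 _]mulrC.
Qed.

Lemma ex_rank_le7 :
  (\rank (contraction_matrix ex_cap ex_eS ex_eT ex_vends Tv) <= 7)%N.
Proof.
set M := contraction_matrix _ _ _ _ _.
have [X [j0 nzX] kerX] := exists_kernel_tensor ex_v1_slice ex_v2_slice ex_v3_slice.
pose x (IS : ex_in) := X (ex_in_coord IS s2) (ex_in_coord IS s1) (ex_in_coord IS s3).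
pose v : 'rV_#|{: ex_in}| := \row_c x (enum_val c).
have nz_v : v != 0.
  have [i [k nzXik]] := matrix0Pn _ nzX.
  apply/rV0Pn; exists (enum_rank (ex_in_of i j0 k)); rewrite mxE enum_rankK /x.
  by case: (ex_in_ofK (i, j0, k)) => -> -> ->.
have vM0 : v *m M^T = 0.
  apply/rowP => r; rewrite !mxE.
  transitivity (\sum_IS x IS * contraction_entry ex_vends Tv (enum_val r) IS).
    by rewrite (big_enum_val (A := {: ex_in})) /=; apply: eq_bigr => c _; rewrite !mxE.
  rewrite sum_ex_in exchange_big /=.
  rewrite -[RHS](kerX (ex_out_coord (enum_val r) t1) (ex_out_coord (enum_val r) t2)).
  apply: eq_bigr => j _; rewrite mxtrace_trmx_mulE.
  apply: eq_bigr => i _; apply: eq_bigr => k _.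
  by rewrite ex_contraction_entry_mx /x; case: (ex_in_ofK (i, j, k)) => -> -> ->.
by rewrite -ltnS -card_ex_in -(mxrank_tr M) (mxrank_ltn_rows nz_v vM0).
Qed.
End UpperBound.

(* The triples (i, j, k) other than (0, 1, 0). *)
Definition ex_sample_i (t : 'I_7) := nth 0 [:: 0; 1; 0; 1; 1; 0; 1] t.
Definition ex_sample_j (t : 'I_7) := nth 0 [:: 0; 0; 0; 0; 1; 1; 1] t.
Definition ex_sample_k (t : 'I_7) := nth 0 [:: 0; 0; 1; 1; 0; 1; 1] t.

Definition ex_sample_in (t : 'I_7) : ex_in :=
  ex_in_of (ex_sample_i t) (ex_sample_j t) (ex_sample_k t).
Definition ex_sample_out (t : 'I_7) : ex_out :=
  ex_out_of (ex_sample_j t + ex_sample_i t) (ex_sample_j t + ex_sample_k t).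

Section LowerBound.
Variable R : fieldType.
Local Open Scope ring_scope.

Definition ex_copy_add (v : exV) (s : seq nat) : R :=
  if v == v1 then ((nth 0 s 0 == nth 0 s 1) && (nth 0 s 1 == nth 0 s 2))%:R
  else (nth 0 s 2 == (nth 0 s 0 + nth 0 s 1)%N)%:R.

Lemma ex_copy_add_entry (IT : ex_out) (IS : ex_in) :
  contraction_entry ex_vends ex_copy_add IT IS =
  ((IT t1 == (IS s2 + IS s1)%N :> nat) && (IT t2 == (IS s2 + IS s3)%N :> nat))%:R.
Proof.
have ne_v1 n : (0 < n < 3)%N -> (o3 n == v1) = false.
  by case/andP=> gt0_n lt_n3; rewrite -val_eqE /= !o3K // eqn0Ngt gt0_n.
rewrite ex_contraction_entryE !big_ord2 /ex_copy_add eqxx !ne_v1 //=.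
have := ex_in_lt IS s2; case: (nat_of_ord (IS s2)) => [|[|//]] _ /=;
  rewrite ?(mul0r, mul1r, add0r, addr0);
  by case: (_ == _); case: (_ == _); rewrite ?(mul0r, mul1r).
Qed.

Lemma ex_copy_add_sample_entry (s t : 'I_7) :
  contraction_entry ex_vends ex_copy_add (ex_sample_out s) (ex_sample_in t) = (s == t)%:R.
Proof.
rewrite ex_copy_add_entry !ex_out_of_val // !ex_in_of_val //; congr (_%:R).
by case: s => -[|[|[|[|[|[|[|//]]]]]]] ?; case: t => -[|[|[|[|[|[|[|//]]]]]]] ?.
Qed.

Lemma ex_rank_ge7 : (7 <= \rank (contraction_matrix ex_cap ex_eS ex_eT ex_vends ex_copy_add))%N.
Proof.
set M := contraction_matrix _ _ _ _ _.
have idM : mxsub (enum_rank \o ex_sample_out) (enum_rank \o ex_sample_in) M = 1%:M.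
  by apply/matrixP => s t; rewrite !mxE !enum_rankK ex_copy_add_sample_entry.
by rewrite -[X in (X <= _)%N](mxrank1 R 7) -idM mxrank_mxsub.
Qed.
End LowerBound.

Lemma ex_cut_prod (Sbar : {set node exS exT exV}) :
  \prod_(e in cut_set ex_ends Sbar) ex_cap e =
  \prod_(e < 7) (if ((ex_ends e).1 \in Sbar) != ((ex_ends e).2 \in Sbar) then ex_cap e else 1).
Proof. by rewrite big_mkcond; apply: eq_bigr => e _; rewrite inE. Qed.

Lemma ex_QMC : is_QMC ex_ends ex_cap 8.
Proof.
split.
  exists [set x : node exS exT exV | if x is inl (inl _) then true else false].
    by apply/andP; split; apply/forallP => u; rewrite inE.
  by rewrite ex_cut_prod !big_ord_recr big_ord0 /= !inE.
move=> Sbar /andP[/forallP inS /forallP notinT].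
rewrite ex_cut_prod !big_ord_recr big_ord0 /= /ex_s /ex_t /ex_v !inS !(negbTE (notinT _)).
by case: (inr (o3 0) \in Sbar); case: (inr (o3 1) \in Sbar); case: (inr (o3 2) \in Sbar).
Qed.

Theorem mainTheorem9 (C : numClosedFieldType) :
  is_QMC ex_ends ex_cap 8 /\
  is_QMF C ex_cap ex_eS ex_eT ex_vends 7.
Proof.
split; first exact: ex_QMC.
split; last exact: ex_rank_le7.
by exists (ex_copy_add C); apply/eqP; rewrite eqn_leq ex_rank_le7 ex_rank_ge7.
Qed.
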